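(* Let $G$ be a finite connected interval graph that is balanced and $p$-critical (for some $p\ge 1$), and let $z$ be a vertex of maximum weight in $G$. If $C$ is an exterior local component at $z$, then $C$ consists of exactly two vertices.
   Context: An interval graph is a finite simple graph whose vertices can be assigned (closed, bounded) real intervals $I_v$ so that $v,w$ are adjacent iff $I_v\cap I_w\ne\emptyset$. For such a representation $\alpha$, $\mathrm{imp}_\alpha(z)$ is the number of intervals $I_w$, $w\ne z$, with $I_w\subseteq I_z$; $\mathrm{imp}(\alpha)=\max_z\mathrm{imp}_\alpha(z)$; and the impropriety $\mathrm{imp}(G)$ is the minimum of $\mathrm{imp}(\alpha)$ over all representations. A local component at $z$ is a connected component of $G\setminus\{z\}$; it is exterior iff it contains a vertex not adjacent to $z$. If $z$ has $n$ local components, $\mathrm{wt}(z)$ is the sum of the $n-2$ smallest orders among the non-exterior local components at $z$ ($0$ if $n\le2$), and $\mathrm{wt}(G)=\max_z \mathrm{wt}(z)$. $G$ is balanced iff $\mathrm{wt}(G)=\mathrm{imp}(G)$. For $p>0$, $G$ is $p$-critical iff $\mathrm{imp}(G)=p$ and every proper induced subgraph of $G$ has impropriety strictly less than $p$. *)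

From Stdlib Require Import Rdefinitions RIneq.
From mathcomp Require Import all_boot.
Set Implicit Arguments. Unset Strict Implicit. Unset Printing Implicit Defensive.

Definition simple_graph (T : finType) (e : rel T) : Prop :=
  symmetric e /\ irreflexive e.

Definition Rleb (x y : R) : bool := if Rle_dec x y then true else false.

Section Graphs.
Variables (T : finType) (e : rel T).

(* (a, b) is an interval representation of the induced subgraph G[S]:
   vertex v in S gets the closed bounded interval [a v, b v]. *)
Definition is_rep (S : {set T}) (a b : T -> R) : Prop :=
  (forall v, v \in S -> Rle (a v) (b v)) /\
  (forall v w, v \in S -> w \in S -> v != w ->
     (e v w <-> (Rle (a v) (b w) /\ Rle (a w) (b v)))).

Definition contained (a b : T -> R) (w z : T) : bool :=
  Rleb (a z) (a w) && Rleb (b w) (b z).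

Definition imp_at (S : {set T}) (a b : T -> R) (z : T) : nat :=
  #|[set w in S | (w != z) && contained a b w z]|.

Definition rep_imp (S : {set T}) (a b : T -> R) : nat :=
  \max_(z in S) imp_at S a b z.

Definition interval_graph (S : {set T}) : Prop :=
  exists a b, is_rep S a b.

Definition impropriety (S : {set T}) (k : nat) : Prop :=
  (exists a b, is_rep S a b /\ rep_imp S a b = k) /\
  (forall a b, is_rep S a b -> k <= rep_imp S a b).

Definition p_critical (p : nat) : Prop :=
  0 < p /\ impropriety [set: T] p /\
  (forall S : {set T}, S \proper [set: T] ->
     exists k, k < p /\ impropriety S k).

Definition connected_graph : Prop := forall x y : T, connect e x y.

Definition erestr (A : {set T}) : rel T :=
  [rel x y | [&& x \in A, y \in A & e x y]].

Definition local_components (z : T) : {set {set T}} :=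
  [set [set y | connect (erestr [set~ z]) x y] | x in [set~ z]].

Definition exterior (z : T) (C : {set T}) : bool :=
  [exists v in C, ~~ e z v].

Definition non_exterior_components (z : T) : {set {set T}} :=
  [set C in local_components z | ~~ exterior z C].

Definition wt (z : T) : nat :=
  sumn (take (#|local_components z| - 2)
              (sort leq (map (fun C : {set T} => #|C|) (enum (non_exterior_components z))))).

Definition wtG : nat := \max_(z : T) wt z.

Definition balanced : Prop := impropriety [set: T] wtG.

End Graphs.

From Stdlib Require Import Rdefinitions RIneq Lra.
From mathcomp Require Import all_boot.
Set Implicit Arguments. Unset Strict Implicit. Unset Printing Implicit Defensive.

(* Since G is balanced and z has maximum weight, p = imp(G) = wt(G) = wt(z).
   An exterior component C contains a neighbour a of z and a neighbour b of a
   that is not adjacent to z, so |C| >= 2.  If C had a third vertex v, the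
   proper induced subgraph G - v would have a representation of impropriety
   < p.  The heart of the proof (lemma [wt_le_rep_imp]) shows that in ANY
   representation of an induced subgraph containing z, a, b and every other
   local component at z, the interval of z contains at least wt(z) intervals:
   the components whose intervals do not all lie inside I_z each contain a
   point covering an endpoint of I_z, hence there are at most two of them
   (two components cannot share a point); the remaining non-exterior
   components contribute their full orders, and these are at least the sum of
   the n-2 smallest orders.  This contradicts impropriety < p = wt(z). *)

Lemma sumn_take_head (u : seq nat) (x k : nat) :
  sorted leq (x :: u) -> k < size u ->
  x + sumn (take k u) <= sumn (take k.+1 u).
Proof.
elim: u x k => [|y u IH] x k //= /andP[le_xy sorted_u].
case: k => [|k] lt_k /=; first by rewrite take0 !addn0.
rewrite addnCA leq_add2l.
exact: leq_trans (leq_add le_xy (leqnn _)) (IH y k sorted_u lt_k).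
Qed.

Lemma sumn_take_sorted_le (u t r : seq nat) (k : nat) :
  sorted leq u -> perm_eq u (t ++ r) -> k <= size t ->
  sumn (take k u) <= sumn t.
Proof.
elim: u t r k => [|x u IH] t r k sorted_xu perm_u le_k //.
have sorted_u : sorted leq u by move: sorted_xu => /= /path_sorted.
have x_tr : x \in t ++ r by rewrite -(perm_mem perm_u) mem_head.
have [x_t|x_t] := boolP (x \in t).
  have perm_t := perm_to_rem x_t.
  rewrite (perm_sumn perm_t) /=.
  have perm_u' : perm_eq u (rem x t ++ r).
    by rewrite -(perm_cons x) (perm_trans perm_u) // -cat_cons perm_cat2r.
  case: k le_k => [|k] le_k //=.
  rewrite leq_add2l (IH _ r) //.
  by rewrite (perm_size perm_t) in le_k.
have x_r : x \in r by move: x_tr; rewrite mem_cat (negbTE x_t).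
have perm_u' : perm_eq u (t ++ rem x r).
  rewrite -(perm_cons x) (perm_trans perm_u) //.
  by rewrite perm_sym -cat1s perm_catCA perm_cat2l perm_sym perm_to_rem.
have le_tu : size t <= size u by rewrite (perm_size perm_u') size_cat leq_addr.
have IHk := IH t (rem x r) k sorted_u perm_u' le_k.
case: k le_k IHk => [|k] le_k IHk //.
exact: leq_trans (sumn_take_head sorted_xu (leq_trans le_k le_tu)) IHk.
Qed.

Lemma RlebP x y : reflect (Rle x y) (Rleb x y).
Proof. rewrite /Rleb; case: Rle_dec => h; by constructor. Qed.

Section LocalComponents.
Variables (T : finType) (e : rel T) (z : T).
Hypothesis e_sym : symmetric e.
Hypothesis e_irr : irreflexive e.

Local Notation restr := (erestr e [set~ z]).
Local Notation L := (local_components e z).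

Lemma restr_connect_sym : connect_sym restr.
Proof.
by apply: sym_connect_sym => x y; rewrite /erestr /= e_sym andbCA andbA.
Qed.

Lemma restr_sub : subrel restr e.
Proof. by move=> x y /and3P[]. Qed.

Lemma restr_connect_neq x y : connect restr x y -> x != z -> y != z.
Proof.
case/connectP=> p + ->; elim: p x => //= y' p IH x /andP[/and3P[_ y'_z _] pth] _.
by apply: IH pth _; rewrite in_setC1 in y'_z.
Qed.

Lemma component_of K x : K \in L -> x \in K -> K = [set y | connect restr x y].
Proof.
case/imsetP=> x0 _ -> ; rewrite inE => c_x0x.
by apply/setP=> w; rewrite !inE (same_connect restr_connect_sym c_x0x).
Qed.

Lemma component_neq K x : K \in L -> x \in K -> x != z.
Proof.
case/imsetP=> x0; rewrite in_setC1 => x0_z -> ; rewrite inE => c.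
exact: restr_connect_neq c x0_z.
Qed.

Lemma component_notin K : K \in L -> z \notin K.
Proof. by move=> K_L; apply/negP => /(component_neq K_L); rewrite eqxx. Qed.

Lemma component_connect K x y : K \in L -> x \in K -> y \in K -> connect restr x y.
Proof. by move=> K_L x_K; rewrite {1}(component_of K_L x_K) inE. Qed.

Lemma component_same K1 K2 x y : K1 \in L -> K2 \in L -> x \in K1 -> y \in K2 ->
  (x = y \/ e x y) -> K1 = K2.
Proof.
move=> K1_L K2_L x_K1 y_K2 xy.
have c_xy : connect restr x y.
  case: xy => [->|e_xy]; first exact: connect0.
  apply: connect1; rewrite /erestr /= !in_setC1 e_xy.
  by rewrite (component_neq K1_L x_K1) (component_neq K2_L y_K2).
rewrite (component_of K1_L x_K1) (component_of K2_L y_K2).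
by apply/setP=> w; rewrite !inE (same_connect restr_connect_sym c_xy).
Qed.

Lemma other_component_avoids K1 K2 v : K1 \in L -> K2 \in L -> K1 != K2 ->
  v \in K2 -> K1 \subset [set~ v].
Proof.
move=> K1_L K2_L neq v_K2; apply/subsetP=> w w_K1; rewrite in_setC1.
apply: contraNneq neq => w_v; apply/eqP.
exact: component_same K1_L K2_L w_K1 v_K2 (or_introl w_v).
Qed.

Lemma components_trivIset (P : {set {set T}}) : P \subset L -> trivIset P.
Proof.
move=> sub_P; apply/trivIsetP=> K1 K2 K1_P K2_P neq.
apply/pred0P=> w /=; apply/negP=> /andP[w_K1 w_K2]; move/eqP: neq; apply.
exact: component_same (subsetP sub_P _ K1_P) (subsetP sub_P _ K2_P) w_K1 w_K2
  (or_introl erefl).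
Qed.

Lemma path_to_neighbor p x : path e x p -> last x p = z -> x != z ->
  exists2 y, connect restr x y & e y z.
Proof.
elim: p x => [|y p IH] x /=; first by move=> _ -> ; rewrite eqxx.
case/andP=> e_xy pth last_p x_z.
have [y_z|y_z] := eqVneq y z; first by exists x; rewrite ?connect0 -?y_z.
have [w c_yw e_wz] := IH y pth last_p y_z; exists w => //.
apply: connect_trans c_yw; apply: connect1.
by rewrite /erestr /= !in_setC1 x_z y_z e_xy.
Qed.

Lemma path_leaves_neighborhood p x : path e x p -> last x p = z -> x != z ->
  ~~ e z x -> exists a b, [/\ connect restr x b, b != z, ~~ e z b, e z a & e a b].
Proof.
elim: p x => [|y p IH] x /=; first by move=> _ -> ; rewrite eqxx.
case/andP=> e_xy pth last_p x_z nzx.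
have [y_z|y_z] := eqVneq y z; first by move: nzx; rewrite e_sym -y_z e_xy.
case e_zy: (e z y); first by exists y, x; split; rewrite ?connect0 // e_sym.
have [a [b [c_yb b_z nzb e_za e_ab]]] := IH y pth last_p y_z (negbT e_zy).
exists a, b; split => //; apply: connect_trans c_yb; apply: connect1.
by rewrite /erestr /= !in_setC1 x_z y_z e_xy.
Qed.

Hypothesis e_conn : connected_graph e.

Lemma component_neighbor K : K \in L -> exists2 u, u \in K & e z u.
Proof.
case/imsetP=> x; rewrite in_setC1 => x_z ->.
case/connectP: (e_conn x z) => p pth last_p.
have [y c_xy e_yz] := path_to_neighbor pth (esym last_p) x_z.
by exists y; rewrite ?inE // e_sym.
Qed.

Lemma exterior_component_edge K : K \in L -> exterior e z K ->
  exists a b, [/\ a \in K, b \in K, e z a, e a b & ~~ e z b].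
Proof.
move=> K_L /existsP[v /andP[v_K nzv]].
case/connectP: (e_conn v z) => p pth last_p.
have [a [b [c_vb b_z nzb e_za e_ab]]] :=
  path_leaves_neighborhood pth (esym last_p) (component_neq K_L v_K) nzv.
have b_K : b \in K by rewrite (component_of K_L v_K) inE.
exists a, b; split => //; rewrite (component_of K_L b_K) inE; apply: connect1.
rewrite /erestr /= !in_setC1 b_z e_sym e_ab andbT.
by apply: contraTneq e_za => ->; rewrite e_irr.
Qed.

End LocalComponents.

Section Representation.
Variables (T : finType) (e : rel T) (S : {set T}) (lo hi : T -> R).
Hypothesis e_irr : irreflexive e.
Hypothesis rep : is_rep e S lo hi.

Lemma rep_adj v w : v \in S -> w \in S -> e v w ->
  Rle (lo v) (hi w) /\ Rle (lo w) (hi v).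
Proof.
move=> v_S w_S e_vw; apply/(proj2 rep v w v_S w_S) => //.
by apply: contraTneq e_vw => ->; rewrite e_irr.
Qed.

Lemma rep_common_point v w t : v \in S -> w \in S ->
  Rle (lo v) t -> Rle t (hi v) -> Rle (lo w) t -> Rle t (hi w) ->
  v = w \/ e v w.
Proof.
move=> v_S w_S h1 h2 h3 h4; have [->|vw] := eqVneq v w; first by left.
by right; apply/(proj2 rep v w v_S w_S vw); split; lra.
Qed.

Lemma rep_nonadj v w : v \in S -> w \in S -> v != w -> ~~ e v w ->
  Rlt (hi v) (lo w) \/ Rlt (hi w) (lo v).
Proof.
move=> v_S w_S vw nvw.
have disj : ~ (Rle (lo v) (hi w) /\ Rle (lo w) (hi v)).
  by move/(proj2 rep v w v_S w_S vw); apply/negP.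
have [|h1] := Rlt_le_dec (hi v) (lo w); first by left.
have [|h2] := Rlt_le_dec (hi w) (lo v); first by right.
by case: disj.
Qed.

Lemma path_covers t p x : path e x p -> {subset x :: p <= S} ->
  Rle (lo x) t -> Rle t (hi (last x p)) ->
  exists2 w, w \in x :: p & Rle (lo w) t /\ Rle t (hi w).
Proof.
elim: p x => [|y p IH] x /=; first by move=> _ _ h1 h2; exists x; rewrite ?mem_head.
case/andP=> e_xy pth sub_S h1 h2.
have [t_x|t_x] := Rle_dec t (hi x); first by exists x; rewrite ?mem_head.
have y_S : y \in S by apply: sub_S; rewrite !inE eqxx orbT.
have [_ lo_y] := rep_adj (sub_S x (mem_head _ _)) y_S e_xy.
have sub_S' : {subset y :: p <= S}.
  by move=> w w_yp; apply: sub_S; rewrite inE w_yp orbT.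
have [|w w_p cov] := IH y pth sub_S' _ h2; first lra.
by exists w; rewrite // inE w_p orbT.
Qed.

Definition covers (t : R) (K : {set T}) : bool :=
  [exists w in K, (w \in S) && Rleb (lo w) t && Rleb t (hi w)].

Lemma coversI t (K : {set T}) w : w \in K -> w \in S ->
  Rle (lo w) t -> Rle t (hi w) -> covers t K.
Proof.
move=> w_K w_S h1 h2; apply/existsP; exists w.
by rewrite w_K w_S; do 2 (apply/andP; split => //); apply/RlebP.
Qed.

Variable z : T.
Hypothesis e_sym : symmetric e.
Hypothesis z_S : z \in S.

Local Notation L := (local_components e z).

Lemma covers_component_uniq t K1 K2 : K1 \in L -> K2 \in L ->
  covers t K1 -> covers t K2 -> K1 = K2.
Proof.
move=> K1_L K2_L /existsP[w1 /andP[w1_K1 /andP[/andP[w1_S /RlebP a1] /RlebP b1]]].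
move=> /existsP[w2 /andP[w2_K2 /andP[/andP[w2_S /RlebP a2] /RlebP b2]]].
exact: (component_same e_sym K1_L K2_L w1_K1 w2_K2
  (rep_common_point w1_S w2_S a1 b1 a2 b2)).
Qed.

Lemma endpoint_covering_components (P : {set {set T}}) :
  P \subset L -> (forall K, K \in P -> covers (lo z) K || covers (hi z) K) ->
  #|P| <= 2.
Proof.
move=> P_L cov; rewrite -card_bool; apply: (@leq_card_in _ _ (covers (lo z))).
move=> K1 K2 K1_P K2_P /= eq_lo.
have K1_L := subsetP P_L _ K1_P; have K2_L := subsetP P_L _ K2_P.
have := cov _ K1_P; have := cov _ K2_P.
case c1: (covers (lo z) K1) eq_lo => /= eq_lo c2 c1'.
  by apply: (covers_component_uniq K1_L K2_L c1); rewrite -eq_lo.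
by apply: (covers_component_uniq K1_L K2_L c1'); move: c2; rewrite -eq_lo.
Qed.

Lemma uncontained_neighbor_covers (K : {set T}) w : w \in K -> w \in S ->
  e z w -> ~~ contained lo hi w z -> covers (lo z) K || covers (hi z) K.
Proof.
move=> w_K w_S e_zw not_in; have [h1 h2] := rep_adj z_S w_S e_zw.
have [h3|h3] := Rlt_le_dec (lo w) (lo z).
  by rewrite (coversI w_K w_S) //; lra.
have [h4|h4] := Rlt_le_dec (hi z) (hi w).
  by rewrite orbC (coversI w_K w_S) //; lra.
by move: not_in; rewrite /contained; do 2 case: RlebP => //.
Qed.

(* If a is adjacent to z and to a vertex b non-adjacent to z, then I_a is not
   inside I_z, since I_b meets I_a but not I_z. *)
Lemma neighbor_of_nonneighbor_uncontained a b : a \in S -> b \in S ->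
  b != z -> e a b -> ~~ e z b -> ~~ contained lo hi a z.
Proof.
move=> a_S b_S b_z e_ab nzb; apply/negP; rewrite /contained => /andP[/RlebP h1 /RlebP h2].
have [h3 h4] := rep_adj a_S b_S e_ab.
have z_b : z != b by rewrite eq_sym.
have [h|h] := rep_nonadj z_S b_S z_b nzb; lra.
Qed.

Lemma component_covers_span K x y t : K \in L -> K \subset S ->
  x \in K -> y \in K -> Rle (lo x) t -> Rle t (hi y) -> covers t K.
Proof.
move=> K_L K_S x_K y_K lo_x hi_y.
case/connectP: (component_connect e_sym K_L x_K y_K) => p pth y_last.
have p_K : {subset x :: p <= K}.
  by move=> w w_p; rewrite (component_of e_sym K_L x_K) inE; apply: path_connect pth _ w_p.
have p_S : {subset x :: p <= S} by move=> w /p_K; apply: (subsetP K_S).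
rewrite y_last in hi_y.
have [w w_p [lo_w hi_w]] := path_covers (sub_path (@restr_sub _ _ _) pth) p_S lo_x hi_y.
exact: coversI (p_K w w_p) (p_S w w_p) lo_w hi_w.
Qed.

(* A local component lying in S and containing a non-neighbour v of z covers
   an endpoint of I_z: it also contains a neighbour u of z, and I_v lies
   beyond I_z while I_u meets I_z. *)
Lemma exterior_component_covers K : connected_graph e -> K \in L ->
  K \subset S -> exterior e z K -> covers (lo z) K || covers (hi z) K.
Proof.
move=> e_conn K_L K_S /existsP[v /andP[v_K nzv]].
have [u u_K e_zu] := component_neighbor e_sym e_conn K_L.
have v_S := subsetP K_S v v_K; have u_S := subsetP K_S u u_K.
have z_v : z != v by rewrite eq_sym (component_neq K_L v_K).
have [lo_u hi_u] := rep_adj z_S u_S e_zu.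
have lohi_v := proj1 rep v v_S.
have [h|h] := rep_nonadj z_S v_S z_v nzv.
  by rewrite orbC (component_covers_span K_L K_S u_K v_K) //; lra.
by rewrite (component_covers_span K_L K_S v_K u_K) //; lra.
Qed.

End Representation.

Lemma wt_le_sum_components (T : finType) (e : rel T) (z : T) (P : {set {set T}}) :
  P \subset non_exterior_components e z ->
  #|local_components e z| - 2 <= #|P| ->
  wt e z <= \sum_(K in P) #|K|.
Proof.
move=> P_N le_P; set N := non_exterior_components e z.
set size_of := fun K : {set T} => #|K|.
have enum_P : [seq K <- enum N | K \in P] = enum P.
  rewrite {2}/enum_mem -filter_predI; apply: eq_filter => K /=.
  by apply/andb_idr => K_P; apply: (subsetP P_N).
have -> : \sum_(K in P) #|K| = sumn (map size_of (enum P)).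
  by rewrite sumnE big_map big_enum.
apply: (@sumn_take_sorted_le _ _ (map size_of [seq K <- enum N | K \notin P])).
- by apply: sort_sorted => m n; apply: leq_total.
- rewrite perm_sort -map_cat; apply: perm_map.
  by rewrite -enum_P perm_sym perm_filterC.
- by rewrite size_map -cardE.
Qed.

Section WeightBound.
Variables (T : finType) (e : rel T) (S : {set T}) (lo hi : T -> R) (z : T).
Hypotheses (e_sym : symmetric e) (e_irr : irreflexive e).
Hypotheses (e_conn : connected_graph e) (rep : is_rep e S lo hi) (z_S : z \in S).

Local Notation L := (local_components e z).

Definition nested_in_z : {set T} := [set w in S | (w != z) && contained lo hi w z].

Lemma unnested_component_covers K : K \in L -> K \subset S ->
  exterior e z K || ~~ (K \subset nested_in_z) ->
  covers S lo hi (lo z) K || covers S lo hi (hi z) K.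
Proof.
move=> K_L K_S; have [ext_K _|int_K /= /subsetPn[w w_K w_nested]] := boolP (exterior e z K).
  exact: (exterior_component_covers e_irr rep e_sym z_S e_conn K_L K_S ext_K).
have w_S := subsetP K_S w w_K.
have e_zw : e z w.
  by apply/negPn; apply: contra int_K => nzw; apply/existsP; exists w; rewrite w_K.
apply: (uncontained_neighbor_covers e_irr rep z_S w_K w_S e_zw).
by move: w_nested; rewrite inE w_S (component_neq K_L w_K).
Qed.

Lemma sum_nested_components_le_imp_at (P : {set {set T}}) : P \subset L ->
  (forall K, K \in P -> K \subset nested_in_z) ->
  \sum_(K in P) #|K| <= imp_at S lo hi z.
Proof.
move=> P_L P_nested; move: (components_trivIset e_sym P_L).
rewrite /trivIset => /eqP ->; apply: subset_leq_card.
by apply/bigcupsP=> K /P_nested.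
Qed.

Lemma wt_le_rep_imp (C : {set T}) (a b : T) : C \in L ->
  (forall K, K \in L -> K != C -> K \subset S) ->
  a \in C -> b \in C -> a \in S -> b \in S -> e z a -> e a b -> ~~ e z b ->
  wt e z <= rep_imp S lo hi.
Proof.
move=> C_L others_S a_C b_C a_S b_S e_za e_ab nzb.
set good := [set K in non_exterior_components e z | K \subset nested_in_z].
have good_N : good \subset non_exterior_components e z.
  by apply/subsetP=> K; rewrite inE => /andP[].
have good_L : good \subset L.
  by apply: subset_trans good_N _; apply/subsetP=> K; rewrite inE => /andP[].
have bad_cover K : K \in L :\: good ->
    covers S lo hi (lo z) K || covers S lo hi (hi z) K.
  rewrite inE => /andP[K_good K_L].
  have [->|K_C] := eqVneq K C.
    apply: (uncontained_neighbor_covers e_irr rep z_S a_C a_S e_za).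
    exact: (neighbor_of_nonneighbor_uncontained e_irr rep z_S a_S b_S (component_neq C_L b_C)).
  apply: unnested_component_covers => //; first exact: others_S.
  by move: K_good; rewrite !inE K_L /=; case: (exterior e z K).
have few_bad : #|L :\: good| <= 2.
  exact: (endpoint_covering_components rep e_sym (subsetDl _ _) bad_cover).
have many_good : #|L| - 2 <= #|good|.
  move: (cardsID good L); rewrite (setIidPr good_L) => <-.
  by rewrite leq_subLR addnC leq_add2r.
have good_nested K : K \in good -> K \subset nested_in_z by rewrite inE => /andP[].
apply: leq_trans (wt_le_sum_components good_N many_good) _.
apply: leq_trans (sum_nested_components_le_imp_at good_L good_nested) _.
exact: leq_bigmax_cond z_S.
Qed.

End WeightBound.

Lemma impropriety_uniq (T : finType) (e : rel T) (S : {set T}) (k1 k2 : nat) :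
  impropriety e S k1 -> impropriety e S k2 -> k1 = k2.
Proof.
move=> [[a1 [b1 [rep1 <-]]] min1] [[a2 [b2 [rep2 <-]]] min2].
by apply/eqP; rewrite eqn_leq min1 // min2.
Qed.

Lemma critical_balanced_p_eq_wt (T : finType) (e : rel T) (p : nat) (z : T) :
  p_critical e p -> balanced e -> (forall y, wt e y <= wt e z) -> p = wt e z.
Proof.
move=> [_ [imp_p _]] bal z_max.
have wtG_z : wtG e = wt e z.
  apply/eqP; rewrite eqn_leq leq_bigmax // andbT.
  by apply/bigmax_leqP => y _; exact: z_max.
by rewrite -wtG_z; apply: impropriety_uniq imp_p bal.
Qed.

Theorem theorem3p1 (T : finType) (e : rel T) (p : nat) (z : T) (C : {set T}) :
  simple_graph e ->
  connected_graph e ->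
  interval_graph e [set: T] ->
  balanced e ->
  1 <= p ->
  p_critical e p ->
  (forall y : T, wt e y <= wt e z) ->
  C \in local_components e z ->
  exterior e z C ->
  #|C| = 2.
Proof.
move=> [e_sym e_irr] e_conn _ bal _ crit z_max C_L ext_C.
have p_wt := critical_balanced_p_eq_wt crit bal z_max.
have [a [b [a_C b_C e_za e_ab nzb]]] := exterior_component_edge e_sym e_irr e_conn C_L ext_C.
have a_b : a != b by apply: contraTneq e_ab => ->; rewrite e_irr.
have ab_C : [set a; b] \subset C by apply/subsetP=> w; rewrite !inE => /orP[]/eqP->.
have le_2C : 2 <= #|C| by move: (subset_leq_card ab_C); rewrite cards2 a_b.
(* a third vertex v of C is impossible: G - v would keep impropriety >= wt(z) = p *)
apply/eqP; rewrite eqn_leq le_2C andbT leqNgt; apply/negP => lt_2C.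
have /set0Pn[v v_C'] : C :\: [set a; b] != set0.
  by rewrite -card_gt0 cardsD (setIidPr ab_C) cards2 a_b subn_gt0.
have [v_C v_ab] := setDP v_C'.
have S_proper : [set~ v] \proper [set: T].
  by rewrite properT; apply/eqP/setP => /(_ v); rewrite !inE eqxx.
have [k [lt_kp [[lo [hi [rep imp_k]] _]]]] := proj2 (proj2 crit) _ S_proper.
have z_S : z \in [set~ v].
  by rewrite in_setC1; apply: contraTneq v_C => <-; exact: component_notin C_L.
have others_S K : K \in local_components e z -> K != C -> K \subset [set~ v].
  by move=> K_L K_C; exact: (other_component_avoids e_sym K_L C_L K_C v_C).
have ab_S w : w \in [set a; b] -> w \in [set~ v].
  by move=> w_ab; rewrite in_setC1; apply: contraTneq w_ab => ->.
have := wt_le_rep_imp e_sym e_irr e_conn rep z_S C_L others_S a_C b_C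
  (ab_S a (set21 a b)) (ab_S b (set22 a b)) e_za e_ab nzb.
by rewrite imp_k -p_wt leqNgt lt_kp.
Qed.
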